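(* For every $\pi\in B_n$, $\ell_B(\pi)\equiv\ell_B(dp(\pi))\pmod 2$.
   Context: $B_n$ is the set of words $\pi=\pi_1\cdots\pi_n$ with $\pi_i\in\{\pm1,\dots,\pm n\}$ and $|\pi_1|\cdots|\pi_n|$ a permutation of $[n]$. $\mathrm{inv}(\pi)=\#\{(i,j):i<j,\pi_i>\pi_j\}$ (usual order), $\ell_B(\pi)=\mathrm{inv}(\pi)-\sum_{i:\pi_i<0}\pi_i$ (equal to $0$ for the empty word). For a word of nonzero integers with distinct absolute values $a_1<\dots<a_m$, its reduction replaces each letter $\pm a_j$ by $\pm j$. $dp(\pi)$ is the reduction of the subword of letters $\pi_i$ with $\pi_i\ne i$. *)

From mathcomp Require Import all_boot all_order all_algebra.
Set Implicit Arguments. Unset Strict Implicit. Unset Printing Implicit Defensive.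
Import Order.TTheory GRing.Theory Num.Theory.
Local Open Scope ring_scope.

(* Words are sequences of integers; positions are 1-based in the paper,
   0-based for nth here. *)

Definition inB (n : nat) (w : seq int) : bool :=
  (size w == n)%N && perm_eq (map (fun x : int => absz x) w) (iota 1 n).

Definition inv (w : seq int) : nat :=
  (\sum_(i < size w) \sum_(j < size w | (i < j)%N)
     ((nth 0%R w j < nth 0%R w i)%R : nat))%N.

Definition ellB (w : seq int) : int :=
  (inv w)%:Z - \sum_(x <- w | x < 0) x.

(* reduction: letter +-a_j (a_1 < ... < a_m the absolute values) becomes +-j;
   j = 1 + number of letters whose absolute value is smaller. *)
Definition reduce (w : seq int) : seq int :=
  map (fun x : int =>
         (if x < 0 then -1 else 1) *
         ((count (fun y : int => (absz y < absz x)%N) w).+1)%:Z) w.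

Definition dp (w : seq int) : seq int :=
  reduce [seq p.1 | p <- zip w (map (fun k : nat => k%:Z) (iota 1 (size w)))
                  & p.1 != p.2].

From Pilot Require Import Defs.
From mathcomp Require Import all_boot all_order all_algebra.
From mathcomp Require Import zify.
Import Order.TTheory GRing.Theory Num.Theory.

(* Write the word as i |-> x_i and call i fixed when x_i = i + 1 (0-based).
   Since reduction preserves the relative order of nonzero letters, dp only
   loses inversions that involve a fixed point p, and it lowers each negative
   letter with |x_i| > p + 1 by one for every such fixed point p.  So
   ell_B(pi) - ell_B(dp pi) is a sum over fixed points p of a crossing count,
   and each crossing count is even: double counting the positions i < p and
   the letters with |x_i| < p + 1 (p of each, as |x| is a permutation)
   equates it, modulo 2, with p + p. *)

Lemma count_sum (T : Type) (a : pred T) (s : seq T) :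
  count a s = \sum_(y <- s) a y.
Proof. by rewrite -sum1_count big_mkcond. Qed.

Lemma count_iota_ltn m a n :
  a <= n -> count (fun v => v < m + a) (iota m n) = a.
Proof.
move=> le_an; rewrite -(subnKC le_an) iotaD count_cat.
rewrite (@eq_in_count _ _ predT (iota m a)); last first.
  by move=> v; rewrite mem_iota => /andP[].
rewrite (@eq_in_count _ _ pred0 (iota (m + a) _)); last first.
  by move=> v; rewrite mem_iota => /andP[le_v _]; rewrite /= ltnNge le_v.
by rewrite count_predT count_pred0 size_iota addn0.
Qed.

Lemma inv_nil : Defs.inv [::] = 0.
Proof. by rewrite /Defs.inv big_ord0. Qed.

Lemma inv_cons a s :
  Defs.inv (a :: s) = count (fun y => (y < a)%R) s + Defs.inv s.
Proof.
rewrite /Defs.inv /= big_ord_recl /=; congr (_ + _).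
  by rewrite big_mkcond big_ord_recl /= add0n count_sum (big_nth 0%R) big_mkord.
apply: eq_bigr => i _.
rewrite (big_mkcond (fun j : 'I_(size s).+1 => _ < _)) big_ord_recl /= add0n.
by rewrite [in RHS]big_mkcond; apply: eq_bigr => j _; rewrite /bump !leq0n.
Qed.

Lemma inv_map_sorted (g : nat -> int) (r : seq nat) : sorted ltn r ->
  Defs.inv (map g r) = \sum_(i <- r) \sum_(j <- r) ((i < j) && (g j < g i)%R).
Proof.
elim: r => [|i r IHr] sorted_ir; first by rewrite inv_nil big_nil.
have lt_ir : all (ltn i) r by apply: order_path_min sorted_ir; apply: ltn_trans.
rewrite /= inv_cons IHr ?(path_sorted sorted_ir) // !big_cons ltnn add0n.
congr (_ + _).
  rewrite count_map count_sum; apply: eq_big_seq => j r_j.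
  by move/allP: lt_ir => /(_ j r_j) /= ->.
apply: eq_big_seq => j r_j; move/allP: lt_ir => /(_ j r_j) /= lt_ij.
by rewrite big_cons ltnNge (ltnW lt_ij).
Qed.

Lemma inv_map_mono (f : int -> int) s :
  {in s &, forall y z, (f z < f y)%R = (z < y)%R} ->
  Defs.inv (map f s) = Defs.inv s.
Proof.
elim: s => [//|a s IHs] f_mono; rewrite /= !inv_cons count_map.
rewrite IHs => [|y z s_y s_z]; last by apply: f_mono; rewrite inE ?s_y ?s_z orbT.
congr (_ + _); apply: eq_in_count => y s_y.
by apply: f_mono; rewrite inE ?s_y ?eqxx ?orbT.
Qed.

Definition negsum (s : seq int) : nat := \sum_(y <- s) (y < 0)%R * absz y.

Lemma ellB_nat s : ellB s = Posz (Defs.inv s + negsum s).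
Proof.
rewrite /ellB PoszD; congr (_ + _)%R; rewrite /negsum.
elim: s => [|y s IHs]; first by rewrite !big_nil.
rewrite !big_cons; case: y => m /=; first by rewrite mul0n add0n.
by rewrite mul1n PoszD -IHs NegzE opprD opprK.
Qed.

Definition abs_rank (u : seq int) (y : int) : nat :=
  count (fun z : int => absz z < absz y) u.

Definition reduce_letter (u : seq int) (y : int) : int :=
  ((if (y < 0)%R then -1 else 1) * Posz (abs_rank u y).+1)%R.

Lemma reduceE u : reduce u = map (reduce_letter u) u.
Proof. by []. Qed.

Lemma abs_rank_lt u y z :
  y \in u -> absz y < absz z -> abs_rank u y < abs_rank u z.
Proof.
move=> + lt_yz; have sub_yz z' : absz z' < absz y -> absz z' < absz z.
  by move/ltn_trans; apply.
elim: u => [//|a u IHu]; rewrite inE /abs_rank /= => /orP[/eqP<-|u_y].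
  by rewrite ltnn lt_yz add0n ltnS; apply: sub_count.
rewrite -addnS; apply: leq_add; last exact: IHu.
by case: ltnP => // /sub_yz ->.
Qed.

Lemma reduce_letter_mono u y z : y \in u -> z \in u -> y != 0%R -> z != 0%R ->
  (reduce_letter u z < reduce_letter u y)%R = (z < y)%R.
Proof.
move=> u_y u_z y_neq0 z_neq0.
have lt_yz := @abs_rank_lt u y z u_y; have lt_zy := @abs_rank_lt u z y u_z.
have eq_yz : absz z = absz y -> abs_rank u z = abs_rank u y.
  by rewrite /abs_rank => ->.
rewrite /reduce_letter; move: (abs_rank u y) (abs_rank u z) lt_yz lt_zy eq_yz.
case: y z y_neq0 z_neq0 {u_y u_z} => [a|a] [b|b] /= *.
all: by rewrite ?mul1r ?mulN1r; lia.
Qed.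

Lemma inv_reduce u : 0%R \notin u -> Defs.inv (reduce u) = Defs.inv u.
Proof.
move=> u_neq0; rewrite reduceE; apply: inv_map_mono => y z u_y u_z.
by apply: reduce_letter_mono => //; apply: contraNneq u_neq0 => <-.
Qed.

Lemma negsum_reduce u :
  negsum (reduce u) = \sum_(y <- u) (y < 0)%R * (abs_rank u y).+1.
Proof.
rewrite reduceE /negsum big_map; apply: eq_bigr => -[m|m] _ /=.
  by rewrite !mul0n.
by rewrite muln1.
Qed.

Lemma dpE w : dp w =
  reduce [seq nth 0%R w i | i <- iota 0 (size w) & nth 0%R w i != Posz i.+1].
Proof.
rewrite /dp -[1]/(1 + 0) iotaDl -map_comp -[in zip w _](mkseq_nth 0%R w).
by rewrite size_mkseq /mkseq zip_map filter_map -map_comp.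
Qed.

(* Summed over i, the left side is a crossing count plus an even number and
   the right side is #{i < p} + #{|x_i| < p + 1} plus an even number. *)
Lemma fixed_point_crossing_pointwise (i p : nat) (v : int) : v != 0%R ->
    (i = p -> v = Posz p.+1) -> (i <> p -> absz v <> p.+1) ->
  ((i < p) && (Posz p.+1 < v)%R) + ((p < i) && (v < Posz p.+1)%R)
    + ((v < 0)%R && (p.+1 < absz v)) + 2 * ((i < p) && (absz v < p.+1))
  = (i < p) + (absz v < p.+1) + 2 * [&& p < i, (v < 0)%R & p.+1 <= absz v].
Proof. by case: v => m /=; lia. Qed.

Section SignedPermutation.

Variables (n : nat) (x : nat -> int).
Hypothesis abs_perm : perm_eq [seq absz (x i) | i <- iota 0 n] (iota 1 n).

Local Notation I := (iota 0 n).
Local Notation fixed i := (x i == Posz i.+1).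

Lemma sum_abs_ltn a : a <= n -> \sum_(i <- I) (absz (x i) < a.+1) = a.
Proof.
move=> le_an.
rewrite -(big_map (fun i => absz (x i)) predT (fun v => v < a.+1 : nat)).
by rewrite -count_sum (permP abs_perm) -add1n count_iota_ltn.
Qed.

Lemma abs_x_bounds i : i < n -> 0 < absz (x i) <= n.
Proof.
move=> lt_in; have : absz (x i) \in iota 1 n.
  rewrite -(perm_mem abs_perm).
  by apply: (map_f (fun i => absz (x i))); rewrite mem_iota.
by rewrite mem_iota add1n ltnS.
Qed.

Lemma x_neq0 i : i < n -> x i != 0%R.
Proof. by move/abs_x_bounds; case: (x i) => -[]. Qed.

Lemma abs_x_inj i j : i < n -> j < n -> absz (x i) = absz (x j) -> i = j.
Proof.
move=> lt_in lt_jn eq_ij; have uniq_abs := iota_uniq 1 n.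
rewrite -(perm_uniq abs_perm) in uniq_abs.
apply/eqP; rewrite -(nth_uniq 0 _ _ uniq_abs) ?size_map ?size_iota //.
by rewrite !(nth_map 0) ?size_iota // !nth_iota // eq_ij.
Qed.

Definition fixed_crossings (p : nat) : nat :=
  \sum_(i <- I) (((i < p) && (Posz p.+1 < x i)%R)
                 + ((p < i) && (x i < Posz p.+1)%R)
                 + ((x i < 0)%R && (p.+1 < absz (x i)))).

Lemma fixed_crossings_even p : p < n -> fixed p -> 2 %| fixed_crossings p.
Proof.
move=> lt_pn /eqP x_p.
pose below := \sum_(i <- I) ((i < p) && (absz (x i) < p.+1)).
pose above := \sum_(i <- I) [&& p < i, (x i < 0)%R & p.+1 <= absz (x i)].
have sum_identity : fixed_crossings p + 2 * below =
    \sum_(i <- I) (i < p) + \sum_(i <- I) (absz (x i) < p.+1) + 2 * above.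
  rewrite !big_distrr -!big_split; apply: eq_big_seq => i.
  rewrite mem_iota add0n => /andP[_ lt_in].
  apply: fixed_point_crossing_pointwise; first exact: x_neq0.
    by move=> ->.
  by move=> neq_ip eq_abs; apply/neq_ip/abs_x_inj => //; rewrite x_p.
have count_below := count_iota_ltn 0 p n (ltnW lt_pn).
rewrite add0n count_sum in count_below.
rewrite count_below sum_abs_ltn ?(ltnW lt_pn) // in sum_identity.
rewrite addnn -mul2n -mulnDr in sum_identity.
by rewrite -(dvdn_addl _ (dvdn_mulr below (dvdnn 2))) sum_identity dvdn_mulr.
Qed.

Lemma inversions_split :
  \sum_(i <- I) \sum_(j <- I) ((i < j) && (x j < x i)%R) =
    \sum_(i <- I) \sum_(j <- I) [&& ~~ fixed i, ~~ fixed j, i < j & (x j < x i)%R]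
  + \sum_(p <- I) fixed p * \sum_(i <- I)
      (((i < p) && (Posz p.+1 < x i)%R) + ((p < i) && (x i < Posz p.+1)%R)).
Proof.
rewrite [X in _ + X](eq_bigr (fun p =>
    \sum_(i <- I) fixed p * ((i < p) && (Posz p.+1 < x i)%R)
  + \sum_(i <- I) fixed p * ((p < i) && (x i < Posz p.+1)%R))); last first.
  move=> p _; rewrite big_distrr -big_split.
  by apply: eq_bigr => i _ /=; rewrite mulnDr.
rewrite big_split [X in _ + (X + _)]exchange_big -!big_split; apply: eq_bigr => i _.
rewrite -!big_split; apply: eq_bigr => j _ /=.
by case: eqP => [->|_]; case: eqP => [->|_] /=; lia.
Qed.

Lemma negsum_split :
  \sum_(i <- I) (x i < 0)%R * absz (x i) =
    \sum_(i <- I) ~~ fixed i * ((x i < 0)%R *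
      (\sum_(j <- I) (~~ fixed j && (absz (x j) < absz (x i)))).+1)
  + \sum_(p <- I) fixed p * \sum_(i <- I) ((x i < 0)%R && (p.+1 < absz (x i))).
Proof.
rewrite [X in _ + X](eq_bigr (fun p =>
    \sum_(i <- I) (fixed p && (x i < 0)%R && (p.+1 < absz (x i))))); last first.
  move=> p _; rewrite big_distrr.
  by apply: eq_bigr => i _ /=; case: (x p == _); rewrite /= ?mul1n.
rewrite [X in _ + X]exchange_big -big_split; apply: eq_big_seq => i.
rewrite mem_iota add0n => /andP[_ lt_in] /=.
case x_neg: (x i < 0)%R; last first.
  by rewrite /= !mul0n muln0 add0n big1 // => p; rewrite andbF.
have nfixed_i : ~~ fixed i by apply: contraTN x_neg => /eqP->.
have abs_xi : absz (x i) = (\sum_(j <- I) (absz (x j) < absz (x i))).+1.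
  have /andP[abs_gt0 abs_le] := abs_x_bounds i lt_in.
  by rewrite -{2}(prednK abs_gt0) sum_abs_ltn ?prednK // (leq_trans (leq_pred _)).
rewrite nfixed_i !mul1n {1}abs_xi addSn; congr S.
rewrite -big_split; apply: eq_bigr => j _ /=.
by case: eqP => [->|_] /=; lia.
Qed.

Lemma inversions_negsum_parity :
  \sum_(i <- I) \sum_(j <- I) ((i < j) && (x j < x i)%R)
    + \sum_(i <- I) (x i < 0)%R * absz (x i) =
  \sum_(i <- I) \sum_(j <- I) [&& ~~ fixed i, ~~ fixed j, i < j & (x j < x i)%R]
    + \sum_(i <- I) ~~ fixed i * ((x i < 0)%R *
      (\sum_(j <- I) (~~ fixed j && (absz (x j) < absz (x i)))).+1) %[mod 2].
Proof.
rewrite inversions_split negsum_split addnACA -modnDmr.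
set crossings := (X in _ + X %% 2); suff /eqP-> : 2 %| crossings by rewrite addn0.
rewrite /crossings -big_split big_seq; apply: dvdn_sum => p.
rewrite mem_iota add0n => /andP[_ lt_pn] /=.
rewrite -mulnDr -big_split; case: eqP => [x_p|_]; last by rewrite mul0n.
by rewrite mul1n; apply: fixed_crossings_even => //; apply/eqP.
Qed.

Local Notation nonfixed := [seq i <- I | ~~ fixed i].

Lemma inv_reduce_nonfixed :
  Defs.inv (reduce [seq x i | i <- nonfixed]) =
  \sum_(i <- I) \sum_(j <- I) [&& ~~ fixed i, ~~ fixed j, i < j & (x j < x i)%R].
Proof.
rewrite inv_reduce; last first.
  apply/mapP=> -[i]; rewrite mem_filter mem_iota add0n.
  move=> /and3P[_ _ lt_in] /esym/eqP.
  by apply/negP; apply: x_neq0.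
rewrite inv_map_sorted; last first.
  by apply: sorted_filter; [apply: ltn_trans | apply: iota_ltn_sorted].
rewrite big_filter big_mkcond; apply: eq_bigr => i _.
rewrite big_filter big_mkcond; case: eqP => [_|_] /=; last first.
  by apply: eq_bigr => j _; case: eqP.
by rewrite big1.
Qed.

Lemma negsum_reduce_nonfixed :
  negsum (reduce [seq x i | i <- nonfixed]) =
  \sum_(i <- I) ~~ fixed i * ((x i < 0)%R *
    (\sum_(j <- I) (~~ fixed j && (absz (x j) < absz (x i)))).+1).
Proof.
rewrite negsum_reduce big_map big_filter big_mkcond; apply: eq_bigr => i _.
case: eqP => [_|_] /=; first by rewrite mul0n.
rewrite mul1n /abs_rank count_map count_filter count_sum.
by congr (_ * _.+1); apply: eq_bigr => j _; rewrite /= andbC.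
Qed.

Lemma inv_negsum_reduce_nonfixed_parity :
  Defs.inv [seq x i | i <- I] + negsum [seq x i | i <- I] =
  Defs.inv (reduce [seq x i | i <- nonfixed])
    + negsum (reduce [seq x i | i <- nonfixed]) %[mod 2].
Proof.
rewrite inv_reduce_nonfixed negsum_reduce_nonfixed -inversions_negsum_parity.
by rewrite inv_map_sorted ?iota_ltn_sorted // /negsum big_map.
Qed.

End SignedPermutation.

Local Open Scope ring_scope.

Theorem mainTheorem10 (n : nat) (w : seq int) :
  inB n w -> (ellB w = ellB (dp w) %[mod 2])%Z.
Proof.
case/andP => /eqP size_w abs_perm.
rewrite !ellB_nat !modz_nat dpE size_w; congr Posz.
have w_eq : w = [seq nth 0 w i | i <- iota 0 n].
  by rewrite -{1}(mkseq_nth 0 w) size_w.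
rewrite {1 2}w_eq; apply: inv_negsum_reduce_nonfixed_parity.
by rewrite {1}w_eq -map_comp in abs_perm.
Qed.
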